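(* Let $\mathfrak{X}$ be a Hilbert space, $M\subset\mathfrak{X}$ a finite-dimensional subspace and $\pi_M$ the orthogonal projection of $\mathfrak{X}$ onto $M$. Let $\Gamma$ and $\Gamma(\varepsilon)$, $\varepsilon>0$, be positive operators on $\mathfrak{X}$ such that $\lim_{\varepsilon\to0^+}\|\Gamma(\varepsilon)h-\Gamma h\|=0$ for every $h\in\mathfrak{X}$. Then for every sequence $\varepsilon_n>0$ with $\varepsilon_n\to0$, $$\lim_{n\to\infty}\big\|\varepsilon_n(\varepsilon_nI+\Gamma(\varepsilon_n))^{-1}\pi_M\big\|_{L(\mathfrak{X})}=0.$$
   Context: An operator $\Gamma\in L(\mathfrak{X})$ is called positive if it is bounded, self-adjoint and $\langle\Gamma x,x\rangle>0$ for all $x\neq0$; it is called nonnegative if it is bounded, self-adjoint and $\langle \Gamma x,x\rangle\ge0$ for all $x$. *)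

From Stdlib Require Import Reals Lra List Classical ClassicalEpsilon.
Open Scope R_scope.

Record Hilbert := {
  hcar :> Type;
  hzero : hcar;
  hadd : hcar -> hcar -> hcar;
  hopp : hcar -> hcar;
  hscal : R -> hcar -> hcar;
  hinner : hcar -> hcar -> R;
  hadd_assoc : forall x y z, hadd x (hadd y z) = hadd (hadd x y) z;
  hadd_comm : forall x y, hadd x y = hadd y x;
  hadd_0 : forall x, hadd x hzero = x;
  hadd_opp : forall x, hadd x (hopp x) = hzero;
  hscal_assoc : forall a b x, hscal a (hscal b x) = hscal (a * b) x;
  hscal_1 : forall x, hscal 1 x = x;
  hscal_distr_l : forall a x y, hscal a (hadd x y) = hadd (hscal a x) (hscal a y);
  hscal_distr_r : forall a b x, hscal (a + b) x = hadd (hscal a x) (hscal b x);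
  hinner_sym : forall x y, hinner x y = hinner y x;
  hinner_add_l : forall x y z, hinner (hadd x y) z = hinner x z + hinner y z;
  hinner_scal_l : forall a x y, hinner (hscal a x) y = a * hinner x y;
  hinner_nonneg : forall x, 0 <= hinner x x;
  hinner_def : forall x, hinner x x = 0 -> x = hzero;
  hcomplete : forall u : nat -> hcar,
    (forall e, 0 < e -> exists N, forall m n, (N <= m)%nat -> (N <= n)%nat ->
        sqrt (hinner (hadd (u m) (hopp (u n))) (hadd (u m) (hopp (u n)))) < e) ->
    exists l, forall e, 0 < e -> exists N, forall n, (N <= n)%nat ->
        sqrt (hinner (hadd (u n) (hopp l)) (hadd (u n) (hopp l))) < e
}.

Section Ops.
Variable X : Hilbert.

Definition hnorm (x : X) : R := sqrt (hinner X x x).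
Definition hsub (x y : X) : X := hadd X x (hopp X y).

Definition is_linear (T : X -> X) : Prop :=
  (forall x y, T (hadd X x y) = hadd X (T x) (T y)) /\
  (forall a x, T (hscal X a x) = hscal X a (T x)).

Definition is_bounded (T : X -> X) : Prop :=
  is_linear T /\ exists C, forall x, hnorm (T x) <= C * hnorm x.

Definition self_adjoint (T : X -> X) : Prop :=
  forall x y, hinner X (T x) y = hinner X x (T y).

Definition positive_op (T : X -> X) : Prop :=
  is_bounded T /\ self_adjoint T /\
  forall x, x <> hzero X -> 0 < hinner X (T x) x.

Fixpoint in_span (l : list X) (x : X) : Prop :=
  match l with
  | nil => x = hzero X
  | v :: l' => exists a y, in_span l' y /\ x = hadd X (hscal X a v) y
  end.

Definition fin_dim_subspace (M : X -> Prop) : Prop :=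
  exists l : list X, forall x, M x <-> in_span l x.

Definition orth_proj (M : X -> Prop) (h : X) : X :=
  epsilon (inhabits (hzero X))
    (fun m => M m /\ forall u, M u -> hinner X (hsub h m) u = 0).

Definition inv_op (A : X -> X) (y : X) : X :=
  epsilon (inhabits (hzero X)) (fun x => A x = y).

Definition id_op : X -> X := fun x => x.

Definition op_norm (T : X -> X) : R :=
  epsilon (inhabits 0)
    (is_lub (fun r => exists h, hnorm h <= 1 /\ r = hnorm (T h))).

End Ops.

Arguments hnorm {X}.
Arguments hsub {X}.
Arguments is_bounded {X}.
Arguments positive_op {X}.
Arguments fin_dim_subspace {X}.
Arguments orth_proj {X}.
Arguments inv_op {X}.
Arguments op_norm {X}.

(* Put x_n = ε_n (ε_n I + Γ(ε_n))^-1 m.  Since Γ(ε_n) x_n = ε_n (m - x_n) and Γ(ε_n) >= 0,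
   ||x_n||^2 <= <m, x_n> and ||x_n|| <= ||m||.  Approximating m by some Γ z (the range of a
   positive operator is dense) and moving Γ(ε_n) across the inner product gives
   ||x_n||^2 <= (||m - Γ z|| + ||Γ z - Γ(ε_n) z|| + 2 ε_n ||z||) ||m||, so x_n -> 0 for every m.
   For linear maps, pointwise convergence on the finite-dimensional M is uniform on its
   unit ball, and ||π_M h|| <= ||h||.  Both the invertibility of ε I + Γ(ε) and the density
   of the range come from minimizing a coercive quadratic functional on a closed subspace. *)

From Stdlib Require Import Reals Lra Classical ClassicalEpsilon.
Open Scope R_scope.

Section Inner_product.
Variable X : Hilbert.

Lemma hinner_zero_l (y : X) : hinner X (hzero X) y = 0.
Proof.
  pose proof (hinner_add_l X (hzero X) (hzero X) y) as H.
  rewrite hadd_0 in H. lra.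
Qed.

Lemma hinner_opp_l (x y : X) : hinner X (hopp X x) y = - hinner X x y.
Proof.
  pose proof (hinner_add_l X x (hopp X x) y) as H.
  rewrite hadd_opp, hinner_zero_l in H. lra.
Qed.

Lemma hinner_add_r (x y z : X) :
  hinner X x (hadd X y z) = hinner X x y + hinner X x z.
Proof. rewrite hinner_sym, hinner_add_l, (hinner_sym X y), (hinner_sym X z). reflexivity. Qed.

Lemma hinner_scal_r a (x y : X) : hinner X x (hscal X a y) = a * hinner X x y.
Proof. rewrite hinner_sym, hinner_scal_l, (hinner_sym X y). reflexivity. Qed.

Lemma hinner_opp_r (x y : X) : hinner X x (hopp X y) = - hinner X x y.
Proof. rewrite hinner_sym, hinner_opp_l, (hinner_sym X y). reflexivity. Qed.

Lemma hinner_zero_r (y : X) : hinner X y (hzero X) = 0.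
Proof. rewrite hinner_sym. apply hinner_zero_l. Qed.

Lemma hinner_sub_l (x y z : X) : hinner X (hsub x y) z = hinner X x z - hinner X y z.
Proof. unfold hsub. rewrite hinner_add_l, hinner_opp_l. ring. Qed.

Lemma hinner_sub_r (x y z : X) : hinner X z (hsub x y) = hinner X z x - hinner X z y.
Proof. unfold hsub. rewrite hinner_add_r, hinner_opp_r. ring. Qed.

Lemma hsub_eq0 (x y : X) : hsub x y = hzero X -> x = y.
Proof.
  unfold hsub. intro H.
  rewrite <- (hadd_0 X x), <- (hadd_opp X y), (hadd_comm X y), hadd_assoc, H,
    hadd_comm, hadd_0. reflexivity.
Qed.

Lemma hvec_ext (x y : X) : (forall z, hinner X x z = hinner X y z) -> x = y.
Proof.
  intro H. apply hsub_eq0, hinner_def.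
  rewrite hinner_sub_l, H. ring.
Qed.

End Inner_product.

Ltac inner_simpl := repeat rewrite ?hinner_add_l, ?hinner_scal_l, ?hinner_opp_l,
  ?hinner_zero_l, ?hinner_add_r, ?hinner_scal_r, ?hinner_opp_r, ?hinner_zero_r,
  ?hinner_sub_l, ?hinner_sub_r.

Ltac inner_simpl_in H := repeat rewrite ?hinner_add_l, ?hinner_scal_l, ?hinner_opp_l,
  ?hinner_zero_l, ?hinner_add_r, ?hinner_scal_r, ?hinner_opp_r, ?hinner_zero_r,
  ?hinner_sub_l, ?hinner_sub_r in H.

Ltac vext := apply hvec_ext; intro; inner_simpl; ring.

Section Norm.
Variable X : Hilbert.

Lemma hnorm_nonneg (x : X) : 0 <= hnorm x.
Proof. apply sqrt_pos. Qed.

Lemma hnorm_sqr (x : X) : hnorm x * hnorm x = hinner X x x.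
Proof. apply sqrt_sqrt, hinner_nonneg. Qed.

Lemma hnorm_le_of_sqr (x : X) b : 0 <= b -> hinner X x x <= b * b -> hnorm x <= b.
Proof. intros Hb H. unfold hnorm. rewrite <- (sqrt_square b Hb). apply sqrt_le_1_alt; auto. Qed.

Lemma hnorm_lt_of_sqr (x : X) b : 0 <= b -> hinner X x x < b * b -> hnorm x < b.
Proof.
  intros Hb H. unfold hnorm. rewrite <- (sqrt_square b Hb). apply sqrt_lt_1_alt.
  split; auto using hinner_nonneg.
Qed.

Lemma hnorm_zero : hnorm (hzero X) = 0.
Proof. unfold hnorm. rewrite hinner_zero_l. apply sqrt_0. Qed.

Lemma hnorm_pos (x : X) : x <> hzero X -> 0 < hnorm x.
Proof.
  intro Hx. apply sqrt_lt_R0.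
  destruct (hinner_nonneg X x) as [H|H]; auto.
  exfalso. apply Hx, hinner_def. auto.
Qed.

Lemma hinner_sqr_le (x y : X) :
  hinner X x y * hinner X x y <= hinner X x x * hinner X y y.
Proof.
  destruct (classic (y = hzero X)) as [->|Hy].
  - rewrite !hinner_zero_r. pose proof (hinner_nonneg X x). nra.
  - assert (Hq : 0 < hinner X y y).
    { rewrite <- hnorm_sqr. pose proof (hnorm_pos y Hy). nra. }
    set (a := hinner X x y) in *. set (q := hinner X y y) in *.
    (* expand 0 <= |x - (a/q) y|^2 *)
    pose proof (hinner_nonneg X (hsub x (hscal X (a / q) y))) as H.
    inner_simpl_in H. rewrite (hinner_sym X y x) in H. fold a q in H.
    replace (hinner X x x - a / q * a - (a / q * a - a / q * (a / q * q)))
      with (hinner X x x - a * a / q) in H by (field; lra).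
    apply (Rmult_le_compat_r q) in H; [|lra].
    replace ((hinner X x x - a * a / q) * q) with (hinner X x x * q - a * a) in H
      by (field; lra).
    lra.
Qed.

Lemma Rabs_hinner_le (x y : X) : Rabs (hinner X x y) <= hnorm x * hnorm y.
Proof.
  pose proof (hinner_sqr_le x y) as H. rewrite <- (hnorm_sqr x), <- (hnorm_sqr y) in H.
  pose proof (hnorm_nonneg x). pose proof (hnorm_nonneg y).
  set (p := hnorm x * hnorm y) in *. set (a := hinner X x y) in *.
  assert (a * a <= p * p) by (unfold p; nra).
  assert (0 <= p) by (unfold p; nra).
  apply Rabs_le. split; nra.
Qed.

Lemma hinner_le_norm (x y : X) : hinner X x y <= hnorm x * hnorm y.
Proof. pose proof (Rabs_hinner_le x y). pose proof (Rle_abs (hinner X x y)). lra. Qed.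

Lemma hnorm_triangle (x y : X) : hnorm (hadd X x y) <= hnorm x + hnorm y.
Proof.
  pose proof (hnorm_nonneg x). pose proof (hnorm_nonneg y).
  apply hnorm_le_of_sqr; [lra|].
  inner_simpl. pose proof (hinner_le_norm x y). rewrite (hinner_sym X y x).
  rewrite <- (hnorm_sqr x), <- (hnorm_sqr y). nra.
Qed.

Lemma hnorm_scal a (x : X) : hnorm (hscal X a x) = Rabs a * hnorm x.
Proof.
  unfold hnorm. inner_simpl. rewrite <- Rmult_assoc, sqrt_mult_alt, <- sqrt_Rsqr_abs;
    [reflexivity|].
  pose proof (Rle_0_sqr a). unfold Rsqr in *. lra.
Qed.

Lemma hnorm_sub_sym (x y : X) : hnorm (hsub x y) = hnorm (hsub y x).
Proof.
  replace (hsub x y) with (hscal X (-1) (hsub y x)) by vext.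
  rewrite hnorm_scal, Rabs_left by lra. ring.
Qed.

Lemma hnorm_sub_triangle (x y z : X) :
  hnorm (hsub x z) <= hnorm (hsub x y) + hnorm (hsub y z).
Proof. replace (hsub x z) with (hadd X (hsub x y) (hsub y z)) by vext. apply hnorm_triangle. Qed.

Lemma hnorm_sqr_add_orth (x y : X) : hinner X x y = 0 ->
  hinner X (hadd X x y) (hadd X x y) = hinner X x x + hinner X y y.
Proof. intro H. inner_simpl. rewrite (hinner_sym X y x), H. ring. Qed.

Lemma linear_zero (A : X -> X) : is_linear X A -> A (hzero X) = hzero X.
Proof.
  intros [_ HZ]. replace (hzero X) with (hscal X 0 (hzero X)) by vext.
  rewrite HZ. vext.
Qed.

Lemma linear_sub (A : X -> X) : is_linear X A -> forall x y, A (hsub x y) = hsub (A x) (A y).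
Proof.
  intros [HD HZ] x y.
  replace (hsub x y) with (hadd X x (hscal X (-1) y)) by vext.
  rewrite HD, HZ. vext.
Qed.

Lemma self_adjoint_swap (A : X -> X) : self_adjoint X A ->
  forall x y, hinner X (A x) y = hinner X (A y) x.
Proof. intros HA x y. rewrite HA, hinner_sym. reflexivity. Qed.

End Norm.

Section Span.
Variable X : Hilbert.

Definition orthogonal_to (S : X -> Prop) (x : X) : Prop :=
  forall u, S u -> hinner X x u = 0.

Lemma span_add (l : list X) x y :
  in_span X l x -> in_span X l y -> in_span X l (hadd X x y).
Proof.
  revert x y. induction l as [|v l IH]; simpl; intros x y Hx Hy.
  - rewrite Hx, Hy, hadd_0. reflexivity.
  - destruct Hx as [a [x' [Hx' ->]]], Hy as [b [y' [Hy' ->]]].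
    exists (a + b), (hadd X x' y'). split; auto. vext.
Qed.

Lemma span_scal (l : list X) c x : in_span X l x -> in_span X l (hscal X c x).
Proof.
  revert x. induction l as [|v l IH]; simpl; intros x Hx.
  - rewrite Hx. vext.
  - destruct Hx as [a [x' [Hx' ->]]].
    exists (c * a), (hscal X c x'). split; auto. vext.
Qed.

Lemma span_cons (l : list X) v y : in_span X l y -> in_span X (v :: l) y.
Proof. intro H. exists 0, y. split; auto. vext. Qed.

Lemma span_cons_sub (l : list X) v p : in_span X l p -> in_span X (v :: l) (hsub v p).
Proof. intro Hp. exists 1, (hscal X (-1) p). split; [apply span_scal; auto | vext]. Qed.

Lemma span_cons_decomp (l : list X) v p u : in_span X l p -> in_span X (v :: l) u ->
  exists a q, in_span X l q /\ u = hadd X (hscal X a (hsub v p)) q.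
Proof.
  intros Hp [a [y [Hy ->]]]. exists a, (hadd X (hscal X a p) y). split.
  - apply span_add; auto. apply span_scal; auto.
  - vext.
Qed.

Lemma span_proj_exists (l : list X) (h : X) :
  exists m, in_span X l m /\ orthogonal_to (in_span X l) (hsub h m).
Proof.
  revert h. induction l as [|v l IH]; intro h.
  - exists (hzero X). split; [reflexivity|]. intros u Hu. rewrite Hu. apply hinner_zero_r.
  - destruct (IH h) as [m [Hm Om]], (IH v) as [p [Hp Op]].
    set (w := hsub v p) in *. set (g := hsub h m) in *.
    (* correct [m] along [w] so that the residual becomes orthogonal to [w] too *)
    set (c := hinner X g w / hinner X w w).
    assert (Hc : hinner X g w = c * hinner X w w).
    { destruct (classic (w = hzero X)) as [->|Hw].
      - rewrite !hinner_zero_r. ring.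
      - pose proof (hnorm_pos X w Hw). rewrite <- hnorm_sqr.
        unfold c. rewrite <- hnorm_sqr. field. lra. }
    exists (hadd X m (hscal X c w)). split.
    + apply span_add; [apply span_cons; auto|].
      apply span_scal, span_cons_sub; auto.
    + intros u Hu. destruct (span_cons_decomp l v p u Hp Hu) as [a [q [Hq ->]]].
      fold w. replace (hsub h (hadd X m (hscal X c w))) with (hsub g (hscal X c w))
        by (unfold g; vext).
      inner_simpl. rewrite (Om q Hq), (Op q Hq), Hc. ring.
Qed.

Lemma orth_proj_spec (M : X -> Prop) (h : X) : fin_dim_subspace M ->
  M (orth_proj M h) /\ orthogonal_to M (hsub h (orth_proj M h)).
Proof.
  intros [l Hl]. unfold orth_proj. apply epsilon_spec.
  destruct (span_proj_exists l h) as [m [Hm Om]].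
  exists m. split; [apply Hl; auto|]. intros u Hu. apply Om, Hl; auto.
Qed.

Lemma hnorm_orth_proj_le (M : X -> Prop) (h : X) : fin_dim_subspace M ->
  hnorm (orth_proj M h) <= hnorm h.
Proof.
  intro HM. destruct (orth_proj_spec M h HM) as [Hp Op].
  set (p := orth_proj M h) in *. clearbody p.
  apply hnorm_le_of_sqr; [apply hnorm_nonneg|].
  rewrite hnorm_sqr. replace h with (hadd X (hsub h p) p) by vext.
  rewrite hnorm_sqr_add_orth by auto.
  pose proof (hinner_nonneg X (hsub h p)). lra.
Qed.

End Span.

Lemma quadratic_nonneg_linear_coef_eq0 (a g : R) : 0 <= a ->
  (forall t, 0 <= 2 * t * g + t * t * a) -> g = 0.
Proof.
  intros Ha H. set (s := / (a + 1)).
  assert (Hs : 0 < s) by (apply Rinv_0_lt_compat; lra).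
  assert (Hsa : s * a = 1 - s) by (unfold s; field; lra).
  pose proof (H (- (s * g))) as Ht.
  replace (2 * - (s * g) * g + - (s * g) * - (s * g) * a)
    with (- (s * g * g) * (1 + s)) in Ht
    by (replace (- (s * g) * - (s * g) * a) with (s * g * g * (s * a)) by ring;
        rewrite Hsa; ring).
  assert (g * g <= 0) by nra. nra.
Qed.

Definition hlim (X : Hilbert) (u : nat -> X) (l : X) : Prop :=
  forall e, 0 < e -> exists N, forall n, (N <= n)%nat -> hnorm (hsub (u n) l) < e.

Section Variational.
Variable X : Hilbert.
Variable V : X -> Prop.
Hypothesis V_zero : V (hzero X).
Hypothesis V_add : forall x y, V x -> V y -> V (hadd X x y).
Hypothesis V_scal : forall a x, V x -> V (hscal X a x).
Hypothesis V_closed : forall u l, (forall k, V (u k)) -> hlim X u l -> V l.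

Variable A : X -> X.
Hypothesis A_linear : is_linear X A.
Hypothesis A_sym : self_adjoint X A.
Variables c K : R.
Hypothesis c_pos : 0 < c.
Hypothesis A_coercive : forall z, c * hinner X z z <= hinner X (A z) z.
Hypothesis A_bounded : forall z, hnorm (A z) <= K * hnorm z.

Variable b : X.

(* The quadratic functional whose minimizers on [V] solve [<A x, z> = <b, z>]. *)
Let energy (x : X) : R := hinner X (A x) x - 2 * hinner X b x.

Lemma energy_lower_bound x : - (hnorm b * hnorm b / c) <= energy x.
Proof.
  unfold energy. pose proof (hinner_le_norm X b x) as Hbx. pose proof (A_coercive x) as Hx.
  rewrite <- hnorm_sqr in Hx.
  set (t := hnorm x) in *. set (beta := hnorm b) in *.
  replace (- (beta * beta / c))
    with (c * t * t - 2 * beta * t - (c * t - beta) * (c * t - beta) / c) by (field; lra).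
  assert (0 <= (c * t - beta) * (c * t - beta) / c).
  { apply Rmult_le_pos; [apply Rle_0_sqr | apply Rlt_le, Rinv_0_lt_compat; lra]. }
  lra.
Qed.

Lemma energy_midpoint x y :
  c / 2 * hinner X (hsub x y) (hsub x y)
  <= energy x + energy y - 2 * energy (hscal X (/ 2) (hadd X x y)).
Proof.
  unfold energy. destruct A_linear as [HD HZ].
  pose proof (A_coercive (hsub x y)) as H.
  rewrite (linear_sub X A A_linear) in H. rewrite HZ, HD.
  inner_simpl. inner_simpl_in H.
  rewrite (self_adjoint_swap X A A_sym y x), (hinner_sym X y x) in *. lra.
Qed.

Lemma energy_sub x y :
  energy y - energy x = hinner X (A (hsub y x)) (hadd X y x) - 2 * hinner X b (hsub y x).
Proof.
  unfold energy. rewrite (linear_sub X A A_linear). inner_simpl.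
  rewrite (self_adjoint_swap X A A_sym x y). ring.
Qed.

Lemma energy_continuous x : forall eta, 0 < eta -> exists rho, 0 < rho /\
  forall y, hnorm (hsub y x) < rho -> Rabs (energy y - energy x) < eta.
Proof.
  intros eta Heta. pose proof (Rabs_pos K) as HK0. pose proof (Rle_abs K) as HK1.
  pose proof (hnorm_nonneg X x) as Hx0. pose proof (hnorm_nonneg X b) as Hb0.
  set (B := Rabs K * (1 + 2 * hnorm x) + 2 * hnorm b + 1).
  assert (HB : 0 < B) by (unfold B; nra).
  exists (Rmin 1 (eta / B)). split.
  { apply Rmin_glb_lt; [lra|]. apply Rdiv_lt_0_compat; auto. }
  intros y Hy. rewrite energy_sub.
  set (r := hnorm (hsub y x)) in *.
  assert (Hr1 : r < 1) by (pose proof (Rmin_l 1 (eta / B)); lra).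
  assert (Hr2 : r * B < eta).
  { pose proof (Rmin_r 1 (eta / B)).
    apply Rlt_le_trans with (eta / B * B); [apply Rmult_lt_compat_r; lra|].
    right. field. lra. }
  assert (Hr0 : 0 <= r) by apply hnorm_nonneg.
  assert (HA : hnorm (A (hsub y x)) <= Rabs K * r).
  { eapply Rle_trans; [apply A_bounded|]. fold r. nra. }
  assert (Hyx : hnorm (hadd X y x) <= r + 2 * hnorm x).
  { replace (hadd X y x) with (hadd X (hsub y x) (hscal X 2 x)) by vext.
    eapply Rle_trans; [apply hnorm_triangle|].
    rewrite hnorm_scal, Rabs_right by lra. fold r. lra. }
  pose proof (Rabs_hinner_le X (A (hsub y x)) (hadd X y x)) as H1.
  pose proof (Rabs_hinner_le X b (hsub y x)) as H2. fold r in H2.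
  pose proof (hnorm_nonneg X (A (hsub y x))) as HA0.
  pose proof (hnorm_nonneg X (hadd X y x)) as Hyx0.
  eapply Rle_lt_trans; [apply Rabs_triang|]. rewrite Rabs_Ropp, Rabs_mult, (Rabs_right 2) by lra.
  assert (Rabs (hinner X (A (hsub y x)) (hadd X y x)) <= Rabs K * r * (1 + 2 * hnorm x)).
  { eapply Rle_trans; [exact H1|].
    apply Rle_trans with (Rabs K * r * (r + 2 * hnorm x)).
    - apply Rmult_le_compat; auto.
    - apply Rmult_le_compat_l; [apply Rmult_le_pos|]; lra. }
  unfold B in Hr2. nra.
Qed.

Lemma energy_inf_exists : exists d, (forall x, V x -> d <= energy x) /\
  forall eta, 0 < eta -> exists x, V x /\ energy x < d + eta.
Proof.
  set (S := fun r => exists x, V x /\ r = - energy x).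
  destruct (completeness S) as [s [Hs1 Hs2]].
  - exists (hnorm b * hnorm b / c). intros r [x [_ ->]].
    pose proof (energy_lower_bound x). lra.
  - exists (- energy (hzero X)), (hzero X). auto.
  - exists (- s). split.
    + intros x Vx. assert (- energy x <= s) by (apply Hs1; exists x; auto). lra.
    + intros eta Heta. apply NNPP. intro H. assert (s <= s - eta); [|lra].
      apply Hs2. intros r [x [Vx ->]].
      destruct (Rlt_le_dec (energy x) (- s + eta)); [|lra].
      exfalso. apply H. exists x. auto.
Qed.

Lemma minimizing_sequence_cauchy (d : R) (u : nat -> X) :
  (forall x, V x -> d <= energy x) ->
  (forall k, V (u k) /\ energy (u k) < d + / (INR k + 1)) ->
  forall e, 0 < e -> exists N, forall m n, (N <= m)%nat -> (N <= n)%nat ->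
    hnorm (hsub (u m) (u n)) < e.
Proof.
  intros Hd Hu e He.
  destruct (archimed_cor1 (c * (e * e) / 4)) as [N [HN1 HN2]].
  { apply Rmult_lt_0_compat; [apply Rmult_lt_0_compat; nra | lra]. }
  exists N. intros j k Hj Hk.
  apply hnorm_lt_of_sqr; [lra|].
  pose proof (energy_midpoint (u j) (u k)) as Hmid.
  pose proof (Hd _ (V_scal (/ 2) _ (V_add _ _ (proj1 (Hu j)) (proj1 (Hu k))))).
  pose proof (proj2 (Hu j)). pose proof (proj2 (Hu k)).
  assert (INR N <= INR j) by (apply le_INR; auto).
  assert (INR N <= INR k) by (apply le_INR; auto).
  assert (0 < INR N) by (apply lt_0_INR; auto).
  assert (/ (INR j + 1) < / INR N) by (apply Rinv_lt_contravar; nra).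
  assert (/ (INR k + 1) < / INR N) by (apply Rinv_lt_contravar; nra).
  apply (Rmult_lt_reg_l (c / 2)); lra.
Qed.

Lemma energy_min_exists : exists x, V x /\ forall y, V y -> energy x <= energy y.
Proof.
  destruct energy_inf_exists as [d [Hd1 Hd2]].
  set (u := fun k : nat => epsilon (inhabits (hzero X))
                 (fun x => V x /\ energy x < d + / (INR k + 1))).
  assert (Hu : forall k, V (u k) /\ energy (u k) < d + / (INR k + 1)).
  { intro k. apply epsilon_spec, Hd2.
    apply Rinv_0_lt_compat. pose proof (pos_INR k). lra. }
  destruct (hcomplete X u (minimizing_sequence_cauchy d u Hd1 Hu)) as [x Hx].
  assert (Vx : V x) by (apply (V_closed u x); [intro k; apply Hu | exact Hx]).
  exists x. split; auto. intros y Vy. apply Rle_trans with d; auto.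
  apply Rnot_lt_le. intro Hlt. set (eta := energy x - d).
  destruct (energy_continuous x (eta / 2)) as [rho [Hrho Hc]]; [unfold eta; lra|].
  destruct (Hx rho Hrho) as [N1 HN1].
  destruct (archimed_cor1 (eta / 2)) as [N2 [HN2 HN2']]; [unfold eta; lra|].
  set (k := max N1 N2).
  pose proof (Hc (u k) (HN1 k (Nat.le_max_l N1 N2))) as H4. apply Rabs_def2 in H4.
  pose proof (proj2 (Hu k)).
  assert (INR N2 <= INR k) by (apply le_INR, Nat.le_max_r).
  assert (0 < INR N2) by (apply lt_0_INR; auto).
  assert (/ (INR k + 1) < / INR N2) by (apply Rinv_lt_contravar; nra).
  unfold eta in *. lra.
Qed.

Lemma energy_min_euler x : V x -> (forall y, V y -> energy x <= energy y) ->
  forall z, V z -> hinner X (A x) z = hinner X b z.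
Proof.
  intros Vx Hmin z Vz.
  enough (hinner X (A x) z - hinner X b z = 0) by lra.
  apply (quadratic_nonneg_linear_coef_eq0 (hinner X (A z) z)).
  { pose proof (A_coercive z). pose proof (hinner_nonneg X z). nra. }
  intro t. pose proof (Hmin _ (V_add _ _ Vx (V_scal t _ Vz))) as H.
  unfold energy in H. destruct A_linear as [HD HZ]. rewrite HD, HZ in H.
  inner_simpl_in H. rewrite (self_adjoint_swap X A A_sym z x) in H. lra.
Qed.

Theorem variational_solution_exists :
  exists x, V x /\ forall z, V z -> hinner X (A x) z = hinner X b z.
Proof.
  destruct energy_min_exists as [x [Vx Hx]].
  exists x. split; auto. apply energy_min_euler; auto.
Qed.

End Variational.

Section Shifted_operator.
Variable X : Hilbert.
Variable T : X -> X.
Hypothesis T_pos : positive_op T.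
Variable e : R.
Hypothesis e_pos : 0 < e.

Definition shift_op (x : X) : X := hadd X (hscal X e x) (T x).

Lemma positive_op_nonneg x : 0 <= hinner X (T x) x.
Proof.
  destruct T_pos as [_ [_ Hp]]. destruct (classic (x = hzero X)) as [->|Hx].
  - rewrite hinner_zero_r. lra.
  - apply Rlt_le, Hp; auto.
Qed.

Lemma shift_op_linear : is_linear X shift_op.
Proof.
  destruct T_pos as [[[HD HZ] _] _]. unfold shift_op. split.
  - intros x y. rewrite HD. vext.
  - intros a x. rewrite HZ. vext.
Qed.

Lemma shift_op_coercive z : e * hinner X z z <= hinner X (shift_op z) z.
Proof. unfold shift_op. inner_simpl. pose proof (positive_op_nonneg z). lra. Qed.

Lemma shift_op_inj u v : shift_op u = shift_op v -> u = v.
Proof.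
  intro Huv. apply hsub_eq0, hinner_def.
  pose proof (shift_op_coercive (hsub u v)) as H.
  rewrite (linear_sub X _ shift_op_linear), Huv in H.
  replace (hsub (shift_op v) (shift_op v)) with (hzero X) in H by vext.
  rewrite hinner_zero_l in H.
  pose proof (hinner_nonneg X (hsub u v)). nra.
Qed.

Lemma shift_op_inv m : shift_op (inv_op shift_op m) = m.
Proof.
  unfold inv_op. apply epsilon_spec.
  destruct T_pos as [[_ [C HC]] [HS _]].
  destruct (variational_solution_exists X (fun _ => True)) with
    (A := shift_op) (c := e) (K := e + C) (b := m) as [x [_ Hx]]; auto.
  - apply shift_op_linear.
  - intros x y. unfold shift_op. inner_simpl. rewrite HS. ring.
  - apply shift_op_coercive.
  - intro z. unfold shift_op. eapply Rle_trans; [apply hnorm_triangle|].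
    rewrite hnorm_scal, Rabs_right by lra. pose proof (HC z). lra.
  - exists x. apply hvec_ext. intro z. apply Hx. auto.
Qed.

Lemma inv_shift_op_linear : is_linear X (inv_op shift_op).
Proof.
  split; intros; apply shift_op_inj.
  - rewrite (proj1 shift_op_linear), !shift_op_inv. reflexivity.
  - rewrite (proj2 shift_op_linear), !shift_op_inv. reflexivity.
Qed.

Definition scaled_resolvent (m : X) : X := hscal X e (inv_op shift_op m).

Lemma scaled_resolvent_linear : is_linear X scaled_resolvent.
Proof.
  destruct inv_shift_op_linear as [HD HZ]. unfold scaled_resolvent. split.
  - intros x y. rewrite HD. apply hscal_distr_l.
  - intros a x. rewrite HZ, !hscal_assoc, Rmult_comm. reflexivity.
Qed.

Lemma scaled_resolvent_eq m :
  T (scaled_resolvent m) = hscal X e (hsub m (scaled_resolvent m)).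
Proof.
  pose proof (shift_op_inv m) as Hy. destruct T_pos as [[[_ HZ] _] _].
  unfold scaled_resolvent. set (y := inv_op shift_op m) in *. unfold shift_op in Hy.
  rewrite HZ, <- Hy. vext.
Qed.

Lemma scaled_resolvent_sqr_le_inner m :
  hinner X (scaled_resolvent m) (scaled_resolvent m) <= hinner X m (scaled_resolvent m).
Proof.
  set (x := scaled_resolvent m). pose proof (positive_op_nonneg x) as H. unfold x in H at 1.
  rewrite scaled_resolvent_eq in H. fold x in H. inner_simpl_in H.
  assert (0 <= hinner X m x - hinner X x x); [|lra].
  apply (Rmult_le_reg_l e); lra.
Qed.

Lemma scaled_resolvent_contraction m : hnorm (scaled_resolvent m) <= hnorm m.
Proof.
  pose proof (scaled_resolvent_sqr_le_inner m) as Hx. set (x := scaled_resolvent m) in *.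
  pose proof (hinner_le_norm X m x). rewrite <- hnorm_sqr in Hx.
  pose proof (hnorm_nonneg X x). pose proof (hnorm_nonneg X m).
  destruct (Req_dec (hnorm x) 0) as [E|E]; [lra|].
  apply (Rmult_le_reg_l (hnorm x)); nra.
Qed.

(* Splitting [<m, x>] through [S z] and [T z], and moving [T] across the inner product. *)
Lemma scaled_resolvent_sqr_le (S : X -> X) m z :
  let x := scaled_resolvent m in
  hnorm x * hnorm x <=
  (hnorm (hsub m (S z)) + hnorm (hsub (S z) (T z)) + 2 * e * hnorm z) * hnorm m.
Proof.
  intro x. pose proof (scaled_resolvent_contraction m) as Hxm. fold x in Hxm.
  assert (E : hinner X m x = hinner X (hsub m (S z)) x + hinner X (hsub (S z) (T z)) x
                             + e * (hinner X z m - hinner X z x)).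
  { destruct T_pos as [_ [HS _]].
    replace (e * (hinner X z m - hinner X z x)) with (hinner X (T z) x).
    - inner_simpl. ring.
    - rewrite HS. unfold x. rewrite scaled_resolvent_eq. inner_simpl. ring. }
  pose proof (hnorm_nonneg X x). pose proof (hnorm_nonneg X z).
  pose proof (hnorm_nonneg X (hsub m (S z))). pose proof (hnorm_nonneg X (hsub (S z) (T z))).
  pose proof (hinner_le_norm X (hsub m (S z)) x).
  pose proof (hinner_le_norm X (hsub (S z) (T z)) x).
  pose proof (hinner_le_norm X z m).
  pose proof (Rabs_hinner_le X z x). pose proof (Rle_abs (- hinner X z x)).
  rewrite Rabs_Ropp in *.
  assert (hinner X z m - hinner X z x <= 2 * hnorm z * hnorm m) by nra.
  rewrite hnorm_sqr. eapply Rle_trans; [apply scaled_resolvent_sqr_le_inner|].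
  fold x. rewrite E. nra.
Qed.

End Shifted_operator.

Section Dense_range.
Variable X : Hilbert.
Variable G : X -> X.
Hypothesis G_pos : positive_op G.

Definition in_closure_range (x : X) : Prop :=
  forall d, 0 < d -> exists z, hnorm (hsub x (G z)) < d.

Lemma closure_range_zero : in_closure_range (hzero X).
Proof.
  intros d Hd. exists (hzero X). destruct G_pos as [[HG _] _].
  rewrite (linear_zero X G HG). replace (hsub (hzero X) (hzero X)) with (hzero X) by vext.
  rewrite hnorm_zero. auto.
Qed.

Lemma closure_range_add x y :
  in_closure_range x -> in_closure_range y -> in_closure_range (hadd X x y).
Proof.
  intros Hx Hy d Hd. destruct G_pos as [[[HD _] _] _].
  destruct (Hx (d / 2)) as [z1 H1]; [lra|]. destruct (Hy (d / 2)) as [z2 H2]; [lra|].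
  exists (hadd X z1 z2). rewrite HD.
  replace (hsub (hadd X x y) (hadd X (G z1) (G z2)))
    with (hadd X (hsub x (G z1)) (hsub y (G z2))) by vext.
  eapply Rle_lt_trans; [apply hnorm_triangle|]. lra.
Qed.

Lemma closure_range_scal a x : in_closure_range x -> in_closure_range (hscal X a x).
Proof.
  intros Hx d Hd. destruct G_pos as [[[_ HZ] _] _]. pose proof (Rabs_pos a).
  destruct (Hx (d / (Rabs a + 1))) as [z H1]; [apply Rdiv_lt_0_compat; lra|].
  exists (hscal X a z). rewrite HZ.
  replace (hsub (hscal X a x) (hscal X a (G z))) with (hscal X a (hsub x (G z))) by vext.
  rewrite hnorm_scal. pose proof (hnorm_nonneg X (hsub x (G z))).
  apply (Rmult_lt_compat_l (Rabs a + 1)) in H1; [|lra].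
  replace ((Rabs a + 1) * (d / (Rabs a + 1))) with d in H1 by (field; lra). nra.
Qed.

Lemma closure_range_closed u l :
  (forall k, in_closure_range (u k)) -> hlim X u l -> in_closure_range l.
Proof.
  intros Hu Hl d Hd. destruct (Hl (d / 2)) as [N HN]; [lra|].
  destruct (Hu N (d / 2)) as [z Hz]; [lra|]. exists z.
  eapply Rle_lt_trans; [apply (hnorm_sub_triangle X l (u N) (G z))|].
  rewrite hnorm_sub_sym. pose proof (HN N (le_n N)). lra.
Qed.

(* Project [m] onto the closure of the range of [G]: the residual is orthogonal to the
   range, hence killed by the positivity of [G]. *)
Lemma positive_op_range_dense m : in_closure_range m.
Proof.
  destruct (variational_solution_exists X in_closure_range) with
    (A := fun x : X => x) (c := 1) (K := 1) (b := m) as [x [Vx Hx]].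
  - exact closure_range_zero.
  - exact closure_range_add.
  - exact closure_range_scal.
  - exact closure_range_closed.
  - split; reflexivity.
  - intros x y. reflexivity.
  - lra.
  - intros; lra.
  - intros; lra.
  - replace m with x; auto. apply hsub_eq0.
    destruct G_pos as [_ [HS HP]]. apply NNPP. intro Hne.
    apply HP in Hne. rewrite HS, hinner_sub_l, Hx in Hne; [lra|].
    intros d Hd. exists (hsub x m). replace (hsub (G (hsub x m)) (G (hsub x m))) with (hzero X)
      by vext. rewrite hnorm_zero. auto.
Qed.

End Dense_range.

Section Uniform_on_span.
Variable X : Hilbert.
Variable f : nat -> X -> X.
Hypothesis f_linear : forall n, is_linear X (f n).

Definition tends_to_zero_at (m : X) : Prop :=
  forall d, 0 < d -> exists N, forall n, (N <= n)%nat -> hnorm (f n m) < d.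

Lemma tends_to_zero_at_relative w d : tends_to_zero_at w -> 0 < d ->
  exists N, forall n, (N <= n)%nat -> hnorm (f n w) <= d * hnorm w.
Proof.
  intros Hw Hd. destruct (classic (w = hzero X)) as [->|Hnz].
  - exists 0%nat. intros n _. rewrite linear_zero, hnorm_zero by auto. lra.
  - destruct (Hw (d * hnorm w)) as [N HN].
    { apply Rmult_lt_0_compat; auto. apply hnorm_pos; auto. }
    exists N. intros n Hn. apply Rlt_le, HN; auto.
Qed.

(* Pointwise convergence to 0 on [span l] is uniform on its unit ball: decompose along
   the Gram-Schmidt vector [v - p] added by each new generator [v]. *)
Lemma tends_to_zero_uniform_on_span (l : list X) :
  (forall m, in_span X l m -> tends_to_zero_at m) ->
  forall d, 0 < d -> exists N, forall n, (N <= n)%nat -> forall m, in_span X l m ->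
    hnorm m <= 1 -> hnorm (f n m) <= d.
Proof.
  induction l as [|v l IH]; intros Hpt d Hd.
  - exists 0%nat. intros n _ m Hm _. simpl in Hm.
    rewrite Hm, linear_zero, hnorm_zero by auto. lra.
  - destruct (span_proj_exists X l v) as [p [Hp Op]].
    set (w := hsub v p) in *.
    destruct (IH (fun m Hm => Hpt m (span_cons X l v m Hm)) (d / 2)) as [N1 HN1]; [lra|].
    destruct (tends_to_zero_at_relative w (d / 2)) as [N2 HN2]; [|lra|].
    { apply Hpt, span_cons_sub; auto. }
    exists (max N1 N2). intros n Hn m Hm Hm1.
    destruct (span_cons_decomp X l v p m Hp Hm) as [a [q [Hq ->]]]. fold w in Hm1 |- *.
    assert (Hpyth : hinner X (hadd X (hscal X a w) q) (hadd X (hscal X a w) q)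
                    = a * a * hinner X w w + hinner X q q).
    { rewrite hnorm_sqr_add_orth; [inner_simpl; ring|]. rewrite hinner_scal_l, Op; auto. ring. }
    assert (Hm2 : a * a * hinner X w w + hinner X q q <= 1).
    { rewrite <- Hpyth, <- hnorm_sqr. pose proof (hnorm_nonneg X (hadd X (hscal X a w) q)). nra. }
    pose proof (hinner_nonneg X w). pose proof (hinner_nonneg X q).
    assert (0 <= a * a * hinner X w w) by (apply Rmult_le_pos; nra).
    assert (Hq1 : hnorm q <= 1) by (apply hnorm_le_of_sqr; lra).
    assert (Ha : Rabs a * hnorm w <= 1).
    { rewrite <- hnorm_scal. apply hnorm_le_of_sqr; [lra|]. inner_simpl. lra. }
    destruct (f_linear n) as [HD HZ]. rewrite HD, HZ.
    eapply Rle_trans; [apply hnorm_triangle|]. rewrite hnorm_scal.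
    pose proof (HN1 n (Nat.le_trans _ _ _ (Nat.le_max_l N1 N2) Hn) q Hq Hq1).
    pose proof (HN2 n (Nat.le_trans _ _ _ (Nat.le_max_r N1 N2) Hn)).
    pose proof (Rabs_pos a). pose proof (hnorm_nonneg X w).
    assert (Rabs a * hnorm (f n w) <= Rabs a * (d / 2 * hnorm w))
      by (apply Rmult_le_compat_l; lra).
    nra.
Qed.

End Uniform_on_span.

Lemma op_norm_le (X : Hilbert) (T : X -> X) B :
  (forall h, hnorm h <= 1 -> hnorm (T h) <= B) -> 0 <= op_norm T <= B.
Proof.
  intro HB. unfold op_norm.
  set (S := fun r => exists h, hnorm h <= 1 /\ r = hnorm (T h)).
  assert (HS0 : S (hnorm (T (hzero X)))).
  { exists (hzero X). rewrite hnorm_zero. split; auto; lra. }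
  assert (Hl : is_lub S (epsilon (inhabits 0) (is_lub S))).
  { apply epsilon_spec. destruct (completeness S) as [s Hs]; [|eauto|exists s; auto].
    exists B. intros r [h [Hh ->]]. auto. }
  destruct Hl as [H1 H2]. split.
  - apply Rle_trans with (hnorm (T (hzero X))); [apply hnorm_nonneg | apply H1; auto].
  - apply H2. intros r [h [Hh ->]]. auto.
Qed.

Lemma scaled_resolvent_tends_to_zero (X : Hilbert) (G : X -> X) (Gam : R -> X -> X)
  (HG : positive_op G) (HGam : forall e, 0 < e -> positive_op (Gam e))
  (Hconv : forall h : X, forall d, 0 < d -> exists eta, 0 < eta /\
      forall e, 0 < e < eta -> hnorm (hsub (Gam e h) (G h)) < d)
  (eps : nat -> R) (Heps_pos : forall n, 0 < eps n) (Heps_lim : Un_cv eps 0) (m : X) :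
  tends_to_zero_at X (fun n => scaled_resolvent X (Gam (eps n)) (eps n)) m.
Proof.
  intros d Hd. pose proof (hnorm_nonneg X m).
  (* each of the three terms of [scaled_resolvent_sqr_le] is made smaller than [delta] *)
  set (delta := d * d / (3 * (hnorm m + 1))).
  assert (Hdelta : 0 < delta) by (apply Rdiv_lt_0_compat; nra).
  destruct (positive_op_range_dense X G HG m delta Hdelta) as [z Hz].
  destruct (Hconv z delta Hdelta) as [eta [Heta Hc]].
  pose proof (hnorm_nonneg X z).
  set (tau := Rmin eta (delta / (2 * hnorm z + 1))).
  assert (Htau : 0 < tau).
  { apply Rmin_glb_lt; auto. apply Rdiv_lt_0_compat; lra. }
  destruct (Heps_lim tau Htau) as [N HN]. exists N. intros n Hn.
  pose proof (HN n Hn) as Hen. pose proof (Heps_pos n) as He.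
  set (e := eps n) in *. unfold R_dist in Hen.
  rewrite Rminus_0_r, Rabs_right in Hen by lra.
  assert (He1 : e < eta) by (assert (tau <= eta) by apply Rmin_l; lra).
  assert (He2 : 2 * e * hnorm z < delta).
  { assert (tau <= delta / (2 * hnorm z + 1)) by apply Rmin_r.
    apply Rle_lt_trans with (e * (2 * hnorm z + 1)); [rewrite Rmult_plus_distr_l; lra|].
    apply Rlt_le_trans with (delta / (2 * hnorm z + 1) * (2 * hnorm z + 1));
      [apply Rmult_lt_compat_r; lra | right; field; lra]. }
  pose proof (Hc e (conj He He1)) as Hz'. rewrite hnorm_sub_sym in Hz'.
  pose proof (scaled_resolvent_sqr_le X (Gam e) (HGam e He) e He G m z) as Hx. simpl in Hx.
  apply hnorm_lt_of_sqr; [lra|]. rewrite <- hnorm_sqr.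
  eapply Rle_lt_trans; [exact Hx|].
  apply Rle_lt_trans with (3 * delta * hnorm m).
  - apply Rmult_le_compat_r; lra.
  - replace (d * d) with (3 * delta * (hnorm m + 1)) by (unfold delta; field; lra). nra.
Qed.

Theorem theorem1 (X : Hilbert) (M : X -> Prop) (HM : fin_dim_subspace M)
  (G : X -> X) (Gam : R -> X -> X)
  (HG : positive_op G)
  (HGam : forall e, 0 < e -> positive_op (Gam e))
  (Hconv : forall h : X, forall d, 0 < d -> exists eta, 0 < eta /\
      forall e, 0 < e < eta -> hnorm (hsub (Gam e h) (G h)) < d)
  (eps : nat -> R) (Heps_pos : forall n, 0 < eps n) (Heps_lim : Un_cv eps 0) :
  Un_cv (fun n => op_norm (fun h : X =>
           hscal X (eps n)
             (inv_op (fun x : X => hadd X (hscal X (eps n) x) (Gam (eps n) x))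
                     (orth_proj M h)))) 0.
Proof.
  intros d Hd. pose proof HM as [l Hl].
  set (f := fun n => scaled_resolvent X (Gam (eps n)) (eps n)).
  assert (Hlin : forall n, is_linear X (f n)).
  { intro n. apply scaled_resolvent_linear; auto. }
  destruct (tends_to_zero_uniform_on_span X f Hlin l
     (fun m _ => scaled_resolvent_tends_to_zero X G Gam HG HGam Hconv eps Heps_pos Heps_lim m)
     (d / 2)) as [N HN]; [lra|].
  exists N. intros n Hn. unfold R_dist. rewrite Rminus_0_r.
  assert (H : 0 <= op_norm (fun h => f n (orth_proj M h)) <= d / 2).
  { apply op_norm_le. intros h Hh. apply HN; auto.
    - apply Hl, orth_proj_spec; auto.
    - eapply Rle_trans; [apply hnorm_orth_proj_le|]; auto. }
  change (Rabs (op_norm (fun h => f n (orth_proj M h))) < d).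
  rewrite Rabs_right; lra.
Qed.
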